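(* Let $(M_i)_{i\in I}$ be a family of strongly sofic monoids. Then the product monoid $\prod_{i\in I}M_i$ is strongly sofic.
   Context: Hamming metric on $\operatorname{Map}(D)$ (monoid of maps $D\to D$, $D$ finite non-empty): $d_D^{\mathrm{Ham}}(f,g)=\frac{1}{|D|}|\{v:f(v)\ne g(v)\}|$. A monoid $M$ is strongly sofic if for every finite $K\subset M$ there is an integer $\Delta_K\ge1$ such that for every $\varepsilon>0$ there exist a non-empty finite set $D$ and a map $\sigma\colon M\to\operatorname{Map}(D)$ with (1) $\sigma(1_M)=\mathrm{Id}_D$; (2) $d_D^{\mathrm{Ham}}(\sigma(k_1k_2),\sigma(k_1)\sigma(k_2))\le\varepsilon$ for $k_1,k_2\in K$; (3) $d_D^{\mathrm{Ham}}(\sigma(k_1),\sigma(k_2))\ge1-\varepsilon$ for distinct $k_1,k_2\in K$; (4) $|\sigma(k)^{-1}(v)|\le\Delta_K$ for $k\in K$, $v\in D$. The product monoid has componentwise multiplication. *)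

From Stdlib Require Import Reals FunctionalExtensionality List.
From mathcomp Require Import all_boot.

Set Implicit Arguments.
Unset Strict Implicit.
Unset Printing Implicit Defensive.

Record monoid := Monoid {
  mcar :> Type;
  mmul : mcar -> mcar -> mcar;
  mone : mcar;
  mmulA : forall x y z, mmul x (mmul y z) = mmul (mmul x y) z;
  mmul1l : forall x, mmul mone x = x;
  mmul1r : forall x, mmul x mone = x
}.

Definition ham_dist (D : finType) (f g : D -> D) : R :=
  Rdiv (INR #|[pred v | f v != g v]|) (INR #|D|).

(* Strongly sofic monoids; finite subsets K of M are given by finite lists. *)
Definition strongly_sofic (M : monoid) : Prop :=
  forall K : list M,
  exists Delta : nat, (1 <= Delta)%N /\
  forall eps : R, Rlt 0 eps ->
  exists (D : finType) (sigma : M -> D -> D),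
    (0 < #|D|)%N /\
    sigma (mone M) = id /\
    (forall k1 k2, In k1 K -> In k2 K ->
       Rle (ham_dist (sigma (mmul k1 k2)) (sigma k1 \o sigma k2)) eps) /\
    (forall k1 k2, In k1 K -> In k2 K -> k1 <> k2 ->
       Rle (Rminus 1 eps) (ham_dist (sigma k1) (sigma k2))) /\
    (forall k v, In k K -> (#|[pred w | sigma k w == v]| <= Delta)%N).

Section Prod.
Variables (I : Type) (M : I -> monoid).
Definition prod_mul (x y : forall i, M i) : forall i, M i :=
  fun i => mmul (x i) (y i).
Definition prod_one : forall i, M i := fun i => mone (M i).
Lemma prod_mulA x y z : prod_mul x (prod_mul y z) = prod_mul (prod_mul x y) z.
Proof. apply: functional_extensionality_dep => i; exact: mmulA. Qed.
Lemma prod_mul1l x : prod_mul prod_one x = x.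
Proof. apply: functional_extensionality_dep => i; exact: mmul1l. Qed.
Lemma prod_mul1r x : prod_mul x prod_one = x.
Proof. apply: functional_extensionality_dep => i; exact: mmul1r. Qed.
Definition prod_monoid : monoid :=
  @Monoid (forall i, M i) prod_mul prod_one prod_mulA prod_mul1l prod_mul1r.
End Prod.

(* Given a finite K in the product, finitely many coordinates j_1, ..., j_n
   already separate the distinct elements of K.  Take sofic approximations
   D_m, sigma_m of the factors M_(j_m) on the projections of K and let an
   element x act on D_1 * ... * D_n by sigma_1 (x j_1) * ... * sigma_n (x j_n).
   The Hamming distance of a product map is at most the sum and at least each
   of the distances of its factors, so the errors add up while every factor
   separates; the preimage bounds multiply. *)

From Stdlib Require Import Reals List Lra Classical FunctionalExtensionality.
From mathcomp Require Import all_boot.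

Set Implicit Arguments.
Unset Strict Implicit.
Unset Printing Implicit Defensive.

Local Open Scope R_scope.

Lemma INR_gt0 (n : nat) : (0 < n)%N -> 0 < INR n.
Proof. by move=> /ltP; apply: lt_0_INR. Qed.

Lemma INR_div_le (m n d : nat) :
  (0 < d)%N -> (m <= n)%N -> INR m / INR d <= INR n / INR d.
Proof.
move=> d_gt0 /leP le_mn; apply: Rmult_le_compat_r; last exact: le_INR.
by left; apply/Rinv_0_lt_compat/INR_gt0.
Qed.

Lemma INR_muln (m n : nat) : INR (m * n)%N = INR m * INR n.
Proof. exact: mult_INR. Qed.

Lemma INR_addn (m n : nat) : INR (m + n)%N = INR m + INR n.
Proof. exact: plus_INR. Qed.

Definition mismatch (D : finType) (f g : D -> D) : {set D} := [set v | f v != g v].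

Lemma ham_distE (D : finType) (f g : D -> D) :
  ham_dist f g = INR #|mismatch f g| / INR #|D|.
Proof. by rewrite /ham_dist cardsE. Qed.

Lemma ham_dist_refl (D : finType) (f : D -> D) : ham_dist f f = 0.
Proof.
rewrite ham_distE (_ : mismatch f f = set0) ?cards0 ?Rdiv_0_l //.
by apply/setP=> v; rewrite !inE eqxx.
Qed.

Definition prod_map (A B : finType) (f : A -> A) (g : B -> B) : A * B -> A * B :=
  fun p => (f p.1, g p.2).

Lemma prod_map_comp (A B : finType) (f g : A -> A) (h l : B -> B) :
  prod_map f h \o prod_map g l = prod_map (f \o g) (h \o l).
Proof. by []. Qed.

Section HammingProduct.
Variables A B : finType.
Implicit Types (f g : A -> A) (h l : B -> B).

Lemma mismatch_prod_map f g h l :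
  mismatch (prod_map f h) (prod_map g l) =
  setX (mismatch f g) [set: B] :|: setX [set: A] (mismatch h l).
Proof.
by apply/setP => -[a b]; rewrite !inE /= xpair_eqE negb_and andbT.
Qed.

Lemma card_mismatch_prod_map_le f g h l :
  (#|mismatch (prod_map f h) (prod_map g l)|
     <= #|mismatch f g| * #|B| + #|A| * #|mismatch h l|)%N.
Proof.
by rewrite mismatch_prod_map (leq_trans (leq_card_setU _ _)) // !cardsX !cardsT.
Qed.

Lemma card_mismatch_prod_map_ge f g h l :
  (#|mismatch f g| * #|B| <= #|mismatch (prod_map f h) (prod_map g l)|)%N /\
  (#|A| * #|mismatch h l| <= #|mismatch (prod_map f h) (prod_map g l)|)%N.
Proof.
rewrite mismatch_prod_map -[#|A|]cardsT -[#|B|]cardsT -!cardsX.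
by split; apply/subset_leq_card; [apply: subsetUl | apply: subsetUr].
Qed.

Hypotheses (A_gt0 : (0 < #|A|)%N) (B_gt0 : (0 < #|B|)%N).

Lemma ham_dist_prod_map_le f g h l :
  ham_dist (prod_map f h) (prod_map g l) <= ham_dist f g + ham_dist h l.
Proof.
have AB_gt0 : (0 < #|A| * #|B|)%N by rewrite muln_gt0 A_gt0.
have [A0 B0] := (INR_gt0 A_gt0, INR_gt0 B_gt0).
rewrite !ham_distE card_prod.
apply: Rle_trans (INR_div_le AB_gt0 (card_mismatch_prod_map_le f g h l)) _.
by rewrite INR_addn !INR_muln; right; field; lra.
Qed.

Lemma ham_dist_prod_map_ge f g h l :
  ham_dist f g <= ham_dist (prod_map f h) (prod_map g l) /\
  ham_dist h l <= ham_dist (prod_map f h) (prod_map g l).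
Proof.
have AB_gt0 : (0 < #|A| * #|B|)%N by rewrite muln_gt0 A_gt0.
have [A0 B0] := (INR_gt0 A_gt0, INR_gt0 B_gt0).
have [ge_l ge_r] := card_mismatch_prod_map_ge f g h l.
rewrite !ham_distE card_prod.
split.
- apply: Rle_trans (INR_div_le AB_gt0 ge_l); rewrite !INR_muln; right; field; lra.
- apply: Rle_trans (INR_div_le AB_gt0 ge_r); rewrite !INR_muln; right; field; lra.
Qed.

End HammingProduct.

Lemma card_preim_prod_map (A B : finType) (f : A -> A) (h : B -> B) (v : A * B) :
  #|[pred w | prod_map f h w == v]| =
  (#|[pred a | f a == v.1]| * #|[pred b | h b == v.2]|)%N.
Proof.
case: v => v1 v2.
rewrite -(eq_card (A := setX [set a | f a == v1] [set b | h b == v2])); last first.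
  by move=> -[a b]; rewrite !inE /= xpair_eqE.
by rewrite cardsX !cardsE.
Qed.

(* [strongly_sofic M] is [forall K, strongly_sofic_on M K (fun x y => x <> y)];
   the relation [apart] prescribes which pairs of [K] must be separated. *)
Definition strongly_sofic_on (M : monoid) (K : list M) (apart : M -> M -> Prop) :
    Prop :=
  exists Delta : nat, (1 <= Delta)%N /\
  forall eps : R, 0 < eps ->
  exists (D : finType) (sigma : M -> D -> D),
    (0 < #|D|)%N /\
    sigma (mone M) = id /\
    (forall k1 k2, In k1 K -> In k2 K ->
       ham_dist (sigma (mmul k1 k2)) (sigma k1 \o sigma k2) <= eps) /\
    (forall k1 k2, In k1 K -> In k2 K -> apart k1 k2 ->
       1 - eps <= ham_dist (sigma k1) (sigma k2)) /\
    (forall k v, In k K -> (#|[pred w | sigma k w == v]| <= Delta)%N).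

Lemma strongly_sofic_on_weaken (M : monoid) (K : list M)
    (apart apart' : M -> M -> Prop) :
  (forall k1 k2, In k1 K -> In k2 K -> apart' k1 k2 -> apart k1 k2) ->
  strongly_sofic_on K apart -> strongly_sofic_on K apart'.
Proof.
move=> apart'_apart [Delta [Delta_ge1 approx]]; exists Delta; split=> // eps eps_gt0.
have [D [sigma [D_gt0 [sigma1 [mul [sep preim]]]]]] := approx eps eps_gt0.
exists D, sigma; do 4!split=> //.
by move=> k1 k2 k1K k2K /(apart'_apart _ _ k1K k2K); apply: sep.
Qed.

Lemma strongly_sofic_on_trivial (M : monoid) (K : list M) :
  strongly_sofic_on K (fun _ _ => False).
Proof.
exists 1%N; split=> // eps eps_gt0.
exists unit, (fun _ => id); split; first by rewrite card_unit.
split=> //.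
split; first by move=> *; rewrite ham_dist_refl; lra.
by split=> // k v _; rewrite (leq_trans (max_card _)) ?card_unit.
Qed.

Definition monoid_morph (M N : monoid) (f : M -> N) : Prop :=
  f (mone M) = mone N /\ forall x y, f (mmul x y) = mmul (f x) (f y).

Lemma strongly_sofic_on_join (M N : monoid) (f : M -> N) (K : list M)
    (apartN : N -> N -> Prop) (apartM : M -> M -> Prop) :
  monoid_morph f ->
  strongly_sofic_on (map f K) apartN -> strongly_sofic_on K apartM ->
  strongly_sofic_on K (fun x y => apartM x y \/ apartN (f x) (f y)).
Proof.
move=> [f1 fM] [DeltaN [DeltaN_ge1 approxN]] [DeltaM [DeltaM_ge1 approxM]].
exists (DeltaM * DeltaN)%N; split; first by rewrite muln_gt0 DeltaM_ge1.
move=> eps eps_gt0; have eps2_gt0 : 0 < eps / 2 by lra.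
have [DN [tau [DN_gt0 [tau1 [mulN [sepN preimN]]]]]] := approxN _ eps2_gt0.
have [DM [sigma [DM_gt0 [sigma1 [mulM [sepM preimM]]]]]] := approxM _ eps2_gt0.
have inK k : In k K -> In (f k) (map f K) by exact: in_map.
exists ((DM * DN)%type : finType), (fun x => prod_map (sigma x) (tau (f x))).
split; first by rewrite card_prod muln_gt0 DM_gt0.
split; first by rewrite sigma1 f1 tau1; apply: functional_extensionality => -[].
split.
  move=> k1 k2 k1K k2K; rewrite fM prod_map_comp.
  apply: Rle_trans (ham_dist_prod_map_le DM_gt0 DN_gt0 _ _ _ _) _.
  by have := mulM _ _ k1K k2K; have := mulN _ _ (inK _ k1K) (inK _ k2K); lra.
split.
  move=> k1 k2 k1K k2K apart.
  have [ge_l ge_r] := ham_dist_prod_map_ge DM_gt0 DN_gt0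
    (sigma k1) (sigma k2) (tau (f k1)) (tau (f k2)).
  case: apart => [/(sepM _ _ k1K k2K) | /(sepN _ _ (inK _ k1K) (inK _ k2K))] sep.
  - by apply: Rle_trans ge_l; lra.
  - by apply: Rle_trans ge_r; lra.
move=> k [v1 v2] kK; rewrite card_preim_prod_map.
exact: leq_mul (preimM _ _ kK) (preimN _ _ (inK _ kK)).
Qed.

Lemma separating_coords (I : Type) (T : I -> Type)
    (L : list ((forall i, T i) * (forall i, T i))) :
  exists js : list I,
    forall p, In p L -> p.1 <> p.2 -> exists2 j, In j js & p.1 j <> p.2 j.
Proof.
elim: L => [|[x y] L [js sep]]; first by exists nil.
have [->|xy] := classic (x = y).
  by exists js => p [<-|pL] //; apply: sep.
have [i xy_i] : exists i, x i <> y i.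
  by apply: not_all_ex_not => xy_eq; apply/xy/functional_extensionality_dep.
exists (i :: js) => p [<- _|pL /(sep _ pL) [j jjs xy_j]]; first by exists i; [left|].
by exists j; [right|].
Qed.

Lemma prod_proj_morph (I : Type) (M : I -> monoid) (j : I) :
  monoid_morph (fun x : prod_monoid M => x j).
Proof. by []. Qed.

Theorem proposition3p8 (I : Type) (M : I -> monoid) :
  (forall i, strongly_sofic (M i)) -> strongly_sofic (prod_monoid M).
Proof.
move=> soficM K.
have [js sep] := separating_coords (list_prod K K).
change (strongly_sofic_on K (fun x y => x <> y)).
suff : strongly_sofic_on K (fun x y => exists2 j, In j js & x j <> y j).
  apply: strongly_sofic_on_weaken => k1 k2 k1K k2K.
  exact: (sep (k1, k2) (in_prod _ _ _ _ k1K k2K)).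
elim: js {sep} => [|j js IH].
  by apply: strongly_sofic_on_weaken (strongly_sofic_on_trivial K) => k1 k2 _ _ [].
have := strongly_sofic_on_join (prod_proj_morph M j) (soficM j _) IH.
apply: strongly_sofic_on_weaken.
by move=> k1 k2 _ _ [i [<-|ijs] ne]; [right | left; exists i].
Qed.
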